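(* Let $\Gamma=(Q,A,E,(\delta_e)_{e\in E})$ be an MEMDP, $q\in Q$, and $W$ a parity objective. Then $$\mathrm{val}^{\mathrm{uni}}_q(\Gamma,W)=\inf_{b\in\mathcal D(E)}\mathrm{val}^{\mathrm{pr}}_q(\Gamma,b,W).$$
   Context: $\mathcal D(X)$ is the set of distributions on $X$ (countable support, summing to 1). An MDP $G=(Q,A,\delta)$ has finite non-empty $Q,A$ and $\delta:Q\times A\to\mathcal D(Q)$; strategies are maps $\sigma:Q\cdot(A\cdot Q)^*\to\mathcal D(A)$, $\mathrm{Strat}(Q,A)$ is their set, and $\mathbb P^\sigma_q[G,\cdot]$ is the induced probability measure on infinite runs from $q$ (infinite state sequences measured by projection). A parity objective given by $f:Q\to\mathbb N$ is the set of infinite state sequences whose maximal label seen infinitely often is even. An MEMDP is $\Gamma=(Q,A,E,(\delta_e)_{e\in E})$ with $E$ finite non-empty and each $\Gamma[e]=(Q,A,\delta_e)$ an MDP. $\mathrm{val}^{\mathrm{uni}}_q(\Gamma,W)=\sup_\sigma\min_{e\in E}\mathbb P^\sigma_q[\Gamma[e],W]$; $\mathrm{val}^{\mathrm{pr}}_q(\Gamma,b,W)=\sup_\sigma\sum_{e\in E}b(e)\,\mathbb P^\sigma_q[\Gamma[e],W]$. *)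

From HB Require Import structures.
From mathcomp Require Import all_boot all_order all_algebra.
From mathcomp Require Import all_classical all_reals.
From mathcomp Require Import ereal sequences.

Set Implicit Arguments.
Unset Strict Implicit.
Unset Printing Implicit Defensive.

Import Order.TTheory GRing.Theory Num.Theory.
Local Open Scope ring_scope.
Local Open Scope classical_set_scope.

Section MEMDP.
Variable R : realType.

(* D(X) for a finite type X: nonnegative weights summing to 1
   (every distribution on a finite set has this form). *)
Record distr (X : finType) := Distr {
  pmf :> X -> R;
  pmf_ge0 : forall x, 0 <= pmf x;
  pmf_sum1 : \sum_(x : X) pmf x = 1 }.

Variables (Q A : finType).

Definition mdp := Q -> A -> distr Q.

(* A history q0 a0 q1 ... a_{n-1} q_n in Q (A Q)^* is represented as the
   pair (q0, [:: (a0,q1); ...; (a_{n-1},q_n)]). *)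
Definition history := (Q * seq (A * Q))%type.

Definition strategy := history -> distr A.

Fixpoint hprob (delta : mdp) (sigma : strategy) (q0 : Q)
  (pre : seq (A * Q)) (cur : Q) (t : seq (A * Q)) : R :=
  match t with
  | [::] => 1
  | (a, q') :: t' =>
      sigma (q0, pre) a * delta cur a q' *
      hprob delta sigma q0 (rcons pre (a, q')) q' t'
  end.

Definition cyl_prob (delta : mdp) (sigma : strategy) (q : Q) (h : history) : R :=
  (h.1 == q)%:R * hprob delta sigma h.1 [::] h.1 h.2.

(* Infinite plays q0 a0 q1 a1 ...: rho i = (q_i, a_i). *)
Definition play := nat -> (Q * A)%type.

Definition cyl (h : history) : set play :=
  [set rho | (rho 0%N).1 = h.1 /\
             [seq ((rho i).2, (rho i.+1).1) | i <- iota 0 (size h.2)] = h.2].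

(* The probability measure P^sigma_q on plays, given by the Caratheodory
   outer measure generated by the cylinder probabilities (it coincides with
   the unique induced probability measure on all measurable sets). *)
Definition play_prob (delta : mdp) (sigma : strategy) (q : Q) (S : set play)
  : \bar R :=
  ereal_inf [set (\sum_(k <oo) (cyl_prob delta sigma q (F k))%:E)%E
            | F in [set F : nat -> history | S `<=` \bigcup_k cyl (F k)]].

Definition states (rho : play) : nat -> Q := fun i => (rho i).1.

Definition Prob (delta : mdp) (sigma : strategy) (q : Q) (W : set (nat -> Q))
  : \bar R := play_prob delta sigma q (states @^-1` W).

Definition inf_often_label (f : Q -> nat) (w : nat -> Q) (m : nat) : Prop :=
  forall N, exists2 i, (N <= i)%N & f (w i) = m.

Definition parity (f : Q -> nat) : set (nat -> Q) :=
  [set w | exists m, [/\ inf_often_label f w m,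
                          (forall m', inf_often_label f w m' -> (m' <= m)%N)
                        & ~~ odd m]].

Variable E : finType.
Definition memdp := E -> mdp.

Definition val_uni (G : memdp) (q : Q) (W : set (nat -> Q)) : \bar R :=
  ereal_sup [set ereal_inf [set Prob (G e) sigma q W | e in [set: E]]
            | sigma in [set: strategy]].

Definition val_pr (G : memdp) (b : distr E) (q : Q) (W : set (nat -> Q))
  : \bar R :=
  ereal_sup [set (\sum_(e : E) (b e)%:E * Prob (G e) sigma q W)%E
            | sigma in [set: strategy]].

End MEMDP.

(* Mixing two strategies history-by-history, in proportion to the probability
   each assigns to the history so far, yields the convex combination of their
   cylinder probabilities; hence the set of achievable payoff vectors
   (P^sigma[Gamma[e], W])_e is convex up to domination.  For payoffs in [0, 1]
   this convexity suffices for a minimax theorem: if every belief b admits a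
   strategy with b-expected payoff >= v - eps, then regret matching (Blackwell
   approachability) against these best responses produces, after O(|E|/eps^2)
   rounds, strategies whose average secures v - 2 eps in every environment,
   and the average is again a strategy by mixing. *)
From HB Require Import structures.
From mathcomp Require Import all_boot all_order all_algebra.
From mathcomp Require Import all_classical all_reals.
From mathcomp Require Import ereal sequences.
From mathcomp Require Import ring lra.

Set Implicit Arguments.
Unset Strict Implicit.
Unset Printing Implicit Defensive.

Import Order.TTheory GRing.Theory Num.Theory.
Local Open Scope classical_set_scope.
Local Open Scope ring_scope.

Section HistoryProbability.
Variables (R : realType) (Q A : finType).

Fixpoint act_prob (sigma : strategy R Q A) (q0 : Q) (pre t : seq (A * Q)) : R :=
  match t with
  | [::] => 1
  | (a, q') :: t' => sigma (q0, pre) a * act_prob sigma q0 (rcons pre (a, q')) t'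
  end.

Fixpoint trans_prob (delta : mdp R Q A) (cur : Q) (t : seq (A * Q)) : R :=
  match t with
  | [::] => 1
  | (a, q') :: t' => delta cur a q' * trans_prob delta q' t'
  end.

Lemma hprobE (delta : mdp R Q A) (sigma : strategy R Q A) q0 pre cur t :
  hprob delta sigma q0 pre cur t = act_prob sigma q0 pre t * trans_prob delta cur t.
Proof.
elim: t pre cur => [|[a q'] t IH] pre cur /=; first by rewrite mulr1.
by rewrite IH; ring.
Qed.

Lemma act_prob_ge0 sigma q0 pre t : 0 <= act_prob sigma q0 pre t.
Proof.
elim: t pre => [|[a q'] t IH] pre /=; first exact: ler01.
by rewrite mulr_ge0 // pmf_ge0.
Qed.

Lemma trans_prob_ge0 delta cur t : 0 <= trans_prob delta cur t.
Proof.
elim: t cur => [|[a q'] t IH] cur /=; first exact: ler01.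
by rewrite mulr_ge0 // pmf_ge0.
Qed.

Lemma cyl_prob_ge0 (delta : mdp R Q A) (sigma : strategy R Q A) q (h : history Q A) :
  0 <= cyl_prob delta sigma q h.
Proof. by rewrite /cyl_prob hprobE !mulr_ge0 ?act_prob_ge0 ?trans_prob_ge0. Qed.

Lemma act_prob_rcons sigma q0 pre x :
  act_prob sigma q0 [::] (rcons pre x) =
  act_prob sigma q0 [::] pre * sigma (q0, pre) x.1.
Proof.
suff gen p : act_prob sigma q0 p (rcons pre x) =
             act_prob sigma q0 p pre * sigma (q0, p ++ pre) x.1 by rewrite gen.
elim: pre p => [|[a q'] pre IH] p /=.
  by case: x => a q' /=; rewrite cats0 mulr1 mul1r.
by rewrite IH -cats1 -catA /=; ring.
Qed.

Lemma trans_prob_single (delta : mdp R Q A) (q : Q) :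
  (forall x : Q, x = q) -> forall cur t, trans_prob delta cur t = 1.
Proof.
move=> Qq cur t; elim: t cur => [//|[a q'] t IH] cur /=; rewrite IH mulr1.
have := pmf_sum1 (delta cur a).
by rewrite (eq_bigl (pred1 q')) ?big_pred1_eq // => x /=; rewrite (Qq x) (Qq q') eqxx.
Qed.

End HistoryProbability.

Section MixedStrategy.
Variables (R : realType) (Q A : finType).
Variables (l : R) (l_ge0 : 0 <= l) (l_le1 : l <= 1).
Variables (s1 s2 : strategy R Q A).

Let w1 (h : history Q A) := l * act_prob s1 h.1 [::] h.2.
Let w2 (h : history Q A) := (1 - l) * act_prob s2 h.1 [::] h.2.

Let w1_ge0 h : 0 <= w1 h.
Proof. by rewrite mulr_ge0 // act_prob_ge0. Qed.

Let w2_ge0 h : 0 <= w2 h.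
Proof. by rewrite mulr_ge0 ?act_prob_ge0 // subr_ge0. Qed.

(* Behavioural form of the mixture "play s1 with probability l, else s2": at h,
   each strategy is weighted by the probability of having produced h.  On
   histories reached by neither, the choice is irrelevant. *)
Definition mix_pmf (h : history Q A) (a : A) : R :=
  if 0 < w1 h + w2 h then (w1 h * s1 h a + w2 h * s2 h a) / (w1 h + w2 h)
  else s1 h a.

Lemma mix_pmf_ge0 h a : 0 <= mix_pmf h a.
Proof.
rewrite /mix_pmf; case: ifP => [w_gt0|_]; last exact: pmf_ge0.
apply: divr_ge0; last exact: ltW.
by rewrite addr_ge0 // mulr_ge0 ?pmf_ge0.
Qed.

Lemma mix_pmf_sum1 h : \sum_a mix_pmf h a = 1.
Proof.
have [w_gt0|w_le0] := boolP (0 < w1 h + w2 h); last first.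
  by under eq_bigr => a _ do rewrite /mix_pmf (negbTE w_le0); exact: pmf_sum1.
under eq_bigr => a _ do rewrite /mix_pmf w_gt0.
by rewrite -mulr_suml big_split /= -!mulr_sumr !pmf_sum1 !mulr1 divff // gt_eqF.
Qed.

Definition mix_strategy : strategy R Q A :=
  fun h => Distr (mix_pmf_ge0 h) (mix_pmf_sum1 h).

Lemma act_prob_mix q0 pre :
  act_prob mix_strategy q0 [::] pre =
  l * act_prob s1 q0 [::] pre + (1 - l) * act_prob s2 q0 [::] pre.
Proof.
elim/last_ind: pre => [|pre x IH] /=; first by ring.
rewrite !act_prob_rcons IH /= /mix_pmf -/(w1 (q0, pre)) -/(w2 (q0, pre)).
case: ifP => [w_gt0|/negbT w_le0].
  by rewrite mulrC divfK ?gt_eqF // /w1 /w2; ring.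
have w_eq0 : w1 (q0, pre) + w2 (q0, pre) = 0.
  by apply/eqP; rewrite eq_le addr_ge0 // andbT leNgt.
have /andP[/eqP w1_eq0 /eqP w2_eq0] : (w1 (q0, pre) == 0) && (w2 (q0, pre) == 0).
  by rewrite -paddr_eq0 // w_eq0.
rewrite /w1 /w2 /= in w1_eq0 w2_eq0 *.
by rewrite !mulrA w1_eq0 w2_eq0; ring.
Qed.

Lemma cyl_prob_mix (delta : mdp R Q A) q h :
  cyl_prob delta mix_strategy q h =
  l * cyl_prob delta s1 q h + (1 - l) * cyl_prob delta s2 q h.
Proof. by rewrite /cyl_prob !hprobE act_prob_mix; ring. Qed.

Local Open Scope ereal_scope.

(* Only an inequality, since [Prob] is an infimum over covers. *)
Lemma Prob_mix (delta : mdp R Q A) q W :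
  l%:E * Prob delta s1 q W + (1 - l)%:E * Prob delta s2 q W <=
  Prob delta mix_strategy q W.
Proof.
apply: le_ereal_inf_tmp => _ [F coverF <-].
rewrite (eq_eseriesr (g := fun k => l%:E * (cyl_prob delta s1 q (F k))%:E +
   (1 - l)%:E * (cyl_prob delta s2 q (F k))%:E)); last first.
  by move=> k _; rewrite cyl_prob_mix EFinD !EFinM.
have l'_ge0 : (0 <= 1 - l)%R by rewrite subr_ge0.
rewrite nneseriesD; last 2 first.
- by move=> k _ _; rewrite -EFinM lee_fin mulr_ge0 // cyl_prob_ge0.
- by move=> k _ _; rewrite -EFinM lee_fin mulr_ge0 // cyl_prob_ge0.
rewrite !nneseriesZl; last 2 first.
- by move=> k _; rewrite lee_fin cyl_prob_ge0.
- by move=> k _; rewrite lee_fin cyl_prob_ge0.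
by apply: leeD; apply: lee_wpmul2l; rewrite ?lee_fin //;
  apply: ereal_inf_lbound; exists F.
Qed.

End MixedStrategy.

Section ProbBounds.
Variables (R : realType) (Q A : finType).
Local Open Scope ereal_scope.

Lemma Prob_ge0 (delta : mdp R Q A) sigma q W : 0 <= Prob delta sigma q W.
Proof.
apply: le_ereal_inf_tmp => _ [F _ <-].
by apply: nneseries_ge0 => k _ _; rewrite lee_fin cyl_prob_ge0.
Qed.

(* Beyond [(q, [::])], the cover uses cylinders of probability 0, which must
   start at some state [r != q]; with a single state every countable cover
   may have infinite mass. *)
Lemma Prob_le1 (delta : mdp R Q A) sigma (q r : Q) W :
  r != q -> Prob delta sigma q W <= 1.
Proof.
move=> rq.
pose F k : history Q A := if k is k'.+1 then
  let x := nth r (enum Q) k' in (if x == q then r else x, [::]) else (q, [::]).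
have coverF : @states Q A @^-1` W `<=` \bigcup_k cyl (F k).
  move=> rho _; have [rho_q|rho_q] := eqVneq (rho 0%N).1 q.
    by exists 0%N => //; rewrite /cyl /= rho_q.
  exists (index (rho 0%N).1 (enum Q)).+1 => //.
  by rewrite /cyl /F /= nth_index ?mem_enum // (negbTE rho_q).
apply: le_trans (ereal_inf_lbound _) _; first by exists F.
rewrite (nneseries_split 0 1) => [|k _]; last by rewrite lee_fin cyl_prob_ge0.
rewrite big_nat1 eseries0 ?adde0 => [|[//|k] _ _].
  by rewrite /cyl_prob /= eqxx mulr1.
by rewrite /cyl_prob /F /=; case: ifP => [_|->]; rewrite ?(negbTE rq) mul0r.
Qed.

Lemma Prob_single (d1 d2 : mdp R Q A) sigma q W :
  (forall x : Q, x = q) -> Prob d1 sigma q W = Prob d2 sigma q W.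
Proof.
move=> Qq; rewrite /Prob /play_prob.
suff -> : cyl_prob d1 sigma q = cyl_prob d2 sigma q by [].
by apply: funext => h; rewrite /cyl_prob !hprobE !(trans_prob_single _ Qq).
Qed.

End ProbBounds.

Section Approachability.
Variables (R : realType) (E : finType) (e0 : E) (S : Type).
Variable x : S -> E -> R.
Hypothesis x_ge0 : forall s e, 0 <= x s e.
Hypothesis x_le1 : forall s e, x s e <= 1.
Hypothesis x_mix : forall l, 0 <= l -> l <= 1 -> forall s1 s2, exists s,
  forall e, l * x s1 e + (1 - l) * x s2 e <= x s e.

Lemma x_average (sigma : nat -> S) T : exists s, forall e,
  \sum_(i < T.+1) x (sigma i) e <= T.+1%:R * x s e.
Proof.
elim: T => [|T [s IH]]; first by exists (sigma 0%N) => e; rewrite big_ord1 mul1r.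
set n : R := T.+1%:R; have n1_gt0 : 0 < n + 1 by apply: addr_gt0; rewrite ?ltr0n.
have l_ge0 : 0 <= n / (n + 1) by rewrite divr_ge0 ?ler0n ?ltW.
have l_le1 : n / (n + 1) <= 1 by rewrite ler_pdivrMr // mul1r lerDl.
have [s' s'_ge] := x_mix l_ge0 l_le1 s (sigma T.+1).
exists s' => e; rewrite big_ord_recr /= -natr1 -/n.
apply: le_trans (ler_wpM2l (ltW n1_gt0) (s'_ge e)).
have -> : (n + 1) * (n / (n + 1) * x s e + (1 - n / (n + 1)) * x (sigma T.+1) e)
  = n * x s e + x (sigma T.+1) e by field; rewrite gt_eqF.
by rewrite lerD2r IH.
Qed.

Section RegretMatching.
Variables (v eps : R) (br : distr R E -> S).
Hypothesis eps_gt0 : 0 < eps.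
Hypothesis br_ge : forall b : distr R E, v - eps <= \sum_e b e * x (br b) e.

Definition pos (r : E -> R) e := Num.max (r e) 0.
Definition pos_sum (r : E -> R) := \sum_e pos r e.

Lemma pos_ge0 r e : 0 <= pos r e.
Proof. by rewrite /pos le_max lexx orbT. Qed.

Lemma le_pos r e : r e <= pos r e.
Proof. by rewrite /pos le_max lexx. Qed.

Lemma pos_sum_ge0 r : 0 <= pos_sum r.
Proof. by apply: sumr_ge0 => e _; exact: pos_ge0. Qed.

Definition regret_pmf (r : E -> R) (e : E) : R :=
  if 0 < pos_sum r then pos r e / pos_sum r else #|E|%:R^-1.

Lemma regret_pmf_ge0 r e : 0 <= regret_pmf r e.
Proof.
rewrite /regret_pmf; case: ifP => [r_gt0|_]; last by rewrite invr_ge0 ler0n.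
by rewrite divr_ge0 ?pos_ge0 ?ltW.
Qed.

Lemma regret_pmf_sum1 r : \sum_e regret_pmf r e = 1.
Proof.
rewrite /regret_pmf; have [r_gt0|_] := boolP (0 < pos_sum r).
  by rewrite -mulr_suml divff // gt_eqF.
have E_gt0 : (0 < #|E|)%N by apply/card_gt0P; exists e0.
by rewrite sumr_const cardT -cardE -[_ *+ _]mulr_natr mulVf // pnatr_eq0 -lt0n.
Qed.

Definition regret_distr r : distr R E := Distr (regret_pmf_ge0 r) (regret_pmf_sum1 r).

Definition response r := br (regret_distr r).

Definition response_value r := \sum_e regret_distr r e * x (response r) e.

Definition regret_step (r : E -> R) e := r e + (response_value r - x (response r) e).

Definition regret t : E -> R := iter t regret_step (fun _ => 0).

Definition potential (r : E -> R) := \sum_e pos r e ^+ 2.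

Lemma regretE t e :
  regret t e = \sum_(i < t) (response_value (regret i) - x (response (regret i)) e).
Proof. by elim: t => [|t IH]; rewrite ?big_ord0 // big_ord_recr /= -IH. Qed.

Lemma response_value_ge0 r : 0 <= response_value r.
Proof. by apply: sumr_ge0 => e _; rewrite mulr_ge0 ?pmf_ge0. Qed.

Lemma response_value_le1 r : response_value r <= 1.
Proof.
rewrite -(pmf_sum1 (regret_distr r)); apply: ler_sum => e _.
by rewrite ler_piMr ?pmf_ge0.
Qed.

Lemma pos_add_sqr (a g : R) : Num.max (a + g) 0 ^+ 2 <= (Num.max a 0 + g) ^+ 2.
Proof.
by case: (ger0P a); case: (ger0P (a + g)) => *; rewrite ?expr0n ?sqr_ge0 //; nra.
Qed.

(* [response_value r] is the average of [x (response r)] with weights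
   proportional to [pos r], so the cross term of the squared potential
   vanishes. *)
Lemma pos_regret_orthogonal r :
  \sum_e pos r e * (response_value r - x (response r) e) = 0.
Proof.
have [r_gt0|r_le0] := boolP (0 < pos_sum r); last first.
  have r_eq0 : pos_sum r = 0 by apply/eqP; rewrite eq_le leNgt r_le0 pos_sum_ge0.
  by apply: big1 => e _; rewrite (psumr_eq0P (fun i _ => pos_ge0 r i) r_eq0) ?mul0r.
have -> : response_value r = (\sum_e pos r e * x (response r) e) / pos_sum r.
  rewrite /response_value /= /regret_pmf r_gt0 mulr_suml.
  by apply: eq_bigr => e _; ring.
under eq_bigr => e _ do rewrite mulrBr.
by rewrite sumrB -mulr_suml mulrC divfK ?gt_eqF // subrr.
Qed.

Lemma potential_step r : potential (regret_step r) <= potential r + #|E|%:R.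
Proof.
apply: (@le_trans _ _ (\sum_e (pos r e + (response_value r - x (response r) e)) ^+ 2)).
  by apply: ler_sum => e _; exact: pos_add_sqr.
under eq_bigr => e _ do rewrite sqrrD.
rewrite big_split big_split /= sumrMnl pos_regret_orthogonal mul0rn addr0 lerD2l.
apply: (@le_trans _ _ (\sum_(e : E) 1)); last by rewrite sumr_const cardT -cardE.
apply: ler_sum => e _.
have := response_value_ge0 r; have := response_value_le1 r.
have := x_ge0 (response r) e; have := x_le1 (response r) e; nra.
Qed.

Lemma potential_regret t : potential (regret t) <= #|E|%:R * t%:R.
Proof.
elim: t => [|t IH].
  by rewrite mulr0 /potential big1 // => e _; rewrite /pos maxxx expr0n.
by apply: le_trans (potential_step _) _; rewrite -natr1 mulrDr mulr1 lerD2r.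
Qed.

Lemma regret_le t e : #|E|%:R <= eps ^+ 2 * t%:R -> regret t e <= eps * t%:R.
Proof.
move=> t_large; apply: le_trans (le_pos _ e) _.
have pos_sqr : pos (regret t) e ^+ 2 <= #|E|%:R * t%:R.
  apply: le_trans (potential_regret t); rewrite /potential (bigD1 e) //= lerDl.
  by apply: sumr_ge0 => i _; rewrite sqr_ge0.
have t_ge0 : 0 <= (t%:R : R) by rewrite ler0n.
have eps_t_ge0 : 0 <= eps * t%:R by rewrite mulr_ge0 // ltW.
rewrite -ler_sqr ?nnegrE ?pos_ge0 //.
by apply: le_trans pos_sqr _; rewrite exprMn expr2 mulrA ler_wpM2r.
Qed.

Lemma regret_matching : exists s, forall e, v - eps *+ 2 <= x s e.
Proof.
set K := Num.Def.truncn (#|E|%:R / eps ^+ 2).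
have eps2_gt0 : 0 < eps ^+ 2 by rewrite exprn_gt0.
have K_large : #|E|%:R <= eps ^+ 2 * K.+1%:R.
  by rewrite mulrC -ler_pdivrMr // ltW // truncnS_gt.
have [s s_avg] := x_average (fun i => response (regret i)) K.
exists s => e.
have value_ge : K.+1%:R * (v - eps) <= \sum_(i < K.+1) response_value (regret i).
  rewrite -[X in X <= _](_ : \sum_(i < K.+1) (v - eps) = _); last first.
    by rewrite sumr_const card_ord mulr_natl.
  by apply: ler_sum => i _; exact: br_ge.
have := regretE K.+1 e; rewrite sumrB => regret_eq.
have K_gt0 : (0 : R) < K.+1%:R by rewrite ltr0n.
rewrite -(ler_pM2l K_gt0); move: (s_avg e) value_ge (regret_le e K_large).
rewrite regret_eq mulr2n; lra.
Qed.

End RegretMatching.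

Lemma approachability (v eps : R) : 0 < eps ->
  (forall b : distr R E, exists s, v - eps <= \sum_e b e * x s e) ->
  exists s, forall e, v - eps *+ 2 <= x s e.
Proof.
move=> eps_gt0 best_response.
pose br b := proj1_sig (cid (best_response b)).
by apply: (@regret_matching v eps br eps_gt0) => b; rewrite /br; case: cid.
Qed.

End Approachability.

Definition point_pmf (R : realType) (X : finType) (x0 : X) (x : X) : R := (x == x0)%:R.

Lemma point_pmf_sum1 (R : realType) (X : finType) (x0 : X) :
  \sum_x point_pmf R x0 x = 1.
Proof. by rewrite (bigD1 x0) //= /point_pmf eqxx big1 ?addr0 // => x /negbTE ->. Qed.

Definition point_distr (R : realType) (X : finType) (x0 : X) : distr R X :=
  Distr (fun x => ler0n _ (x == x0)) (point_pmf_sum1 R x0).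

Section Minimax.
Variables (R : realType) (E : finType) (S : Type).
Local Open Scope ereal_scope.

Definition maximin (y : S -> E -> \bar R) : \bar R :=
  ereal_sup [set ereal_inf [set y s e | e in [set: E]] | s in [set: S]].

Definition minimax (y : S -> E -> \bar R) : \bar R :=
  ereal_inf [set ereal_sup [set \sum_e (b e)%:E * y s e | s in [set: S]]
            | b in [set: distr R E]].

Lemma sume_distr_const (b : distr R E) (m : \bar R) :
  0 <= m -> \sum_e (b e)%:E * m = m.
Proof.
move=> m_ge0; rewrite -ge0_sume_distrl; last by move=> e _; rewrite lee_fin pmf_ge0.
by rewrite sumEFin pmf_sum1 mul1e.
Qed.

Lemma maximin_le_minimax y : (forall s e, 0 <= y s e) -> maximin y <= minimax y.
Proof.
move=> y_ge0; apply: le_ereal_inf_tmp => _ [b _ <-].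
apply: ge_ereal_sup => _ [s _ <-].
apply: le_trans (ereal_sup_ubound _); last by exists s.
have inf_ge0 : 0 <= ereal_inf [set y s e | e in [set: E]].
  by apply: le_ereal_inf_tmp => _ [e _ <-].
rewrite -{1}(sume_distr_const b inf_ge0); apply: lee_sum => e _.
by apply: lee_wpmul2l; [rewrite lee_fin pmf_ge0 | apply: ereal_inf_lbound; exists e].
Qed.

Lemma minimax_le_maximin_const y (e0 : E) :
  (forall s e, 0 <= y s e) -> (forall s e, y s e = y s e0) -> minimax y <= maximin y.
Proof.
move=> y_ge0 y_const; apply: le_trans (ereal_inf_lbound _) _.
  by exists (point_distr R e0).
apply: ge_ereal_sup => _ [s _ <-].
apply: le_trans (ereal_sup_ubound _); last by exists s.
under eq_bigr => e _ do rewrite y_const.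
rewrite sume_distr_const //; apply: le_ereal_inf_tmp => _ [e _ <-].
by rewrite y_const.
Qed.

Lemma minimax_ge0 (s0 : S) y : (forall s e, 0 <= y s e) -> 0 <= minimax y.
Proof.
move=> y_ge0; apply: le_ereal_inf_tmp => _ [b _ <-].
apply: le_trans (ereal_sup_ubound _); last by exists s0.
by apply: sume_ge0 => e _; rewrite mule_ge0 ?lee_fin ?pmf_ge0.
Qed.

Lemma minimax_le1 (e0 : E) y : (forall s e, y s e <= 1) -> minimax y <= 1.
Proof.
move=> y_le1; apply: le_trans (ereal_inf_lbound _) _.
  by exists (point_distr R e0).
apply: ge_ereal_sup => _ [s _ <-].
rewrite -(sume_distr_const (point_distr R e0) lee01).
by apply: lee_sum => e _; rewrite lee_wpmul2l ?lee_fin ?pmf_ge0.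
Qed.

Lemma minimax_le_maximin y (e0 : E) (s0 : S) :
  (forall s e, 0 <= y s e) -> (forall s e, y s e <= 1) ->
  (forall l, (0 <= l)%R -> (l <= 1)%R -> forall s1 s2, exists s, forall e,
     l%:E * y s1 e + (1 - l)%:E * y s2 e <= y s e) ->
  minimax y <= maximin y.
Proof.
move=> y_ge0 y_le1 y_mix.
pose x s e := fine (y s e).
have yE s e : y s e = (x s e)%:E.
  by rewrite fineK // ge0_fin_numE // (le_lt_trans (y_le1 s e)) ?ltry.
have x_ge0 s e : (0 <= x s e)%R by rewrite -lee_fin -yE.
have x_le1 s e : (x s e <= 1)%R by rewrite -lee_fin -yE.
have x_mix l : (0 <= l)%R -> (l <= 1)%R -> forall s1 s2, exists s, forall e,
    (l * x s1 e + (1 - l) * x s2 e <= x s e)%R.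
  move=> l_ge0 l_le1 s1 s2; have [s s_ge] := y_mix l l_ge0 l_le1 s1 s2.
  by exists s => e; have := s_ge e; rewrite !yE -!EFinM -EFinD lee_fin.
have sumE (b : distr R E) s : \sum_e (b e)%:E * y s e = (\sum_e b e * x s e)%:E.
  by rewrite -sumEFin; apply: eq_bigr => e _; rewrite yE EFinM.
set V := minimax y.
have VE : V = (fine V)%:E.
  rewrite fineK // ge0_fin_numE ?(minimax_ge0 s0) //.
  by rewrite (le_lt_trans (minimax_le1 e0 y_le1)) ?ltry.
rewrite VE; apply/lee_addgt0Pr => eps eps_gt0.
have eps2_gt0 : (0 < eps / 2)%R by rewrite divr_gt0.
have best_response (b : distr R E) :
    exists s, (fine V - eps / 2 <= \sum_e b e * x s e)%R.
  have : (fine V - eps / 2)%:E <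
         ereal_sup [set \sum_e (b e)%:E * y s e | s in [set: S]].
    apply: (@lt_le_trans _ _ V); last by apply: ereal_inf_lbound; exists b.
    by rewrite {2}VE lte_fin ltrBlDr ltrDl.
  by move=> /ereal_sup_gt [_ [s _ <-]]; rewrite sumE lte_fin => /ltW; exists s.
have [s s_ge] := approachability e0 x_ge0 x_le1 x_mix eps2_gt0 best_response.
have -> : fine V = (fine V - eps + eps)%R by rewrite subrK.
rewrite EFinD leeD2r //; apply: le_trans (ereal_sup_ubound _); last by exists s.
apply: le_ereal_inf_tmp => _ [e _ <-]; rewrite yE lee_fin.
by have := s_ge e; rewrite mulr2n -splitr.
Qed.

End Minimax.

Theorem mainTheorem5 (R : realType) (Q A E : finType)
  (a0 : A) (e0 : E) (G : memdp R Q A E) (q : Q) (f : Q -> nat) :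
  val_uni G q (parity f) =
  ereal_inf [set val_pr G b q (parity f) | b in [set: distr R E]].
Proof.
pose y (sigma : strategy R Q A) e := Prob (G e) sigma q (parity f).
have y_ge0 sigma e : (0 <= y sigma e)%E by exact: Prob_ge0.
change (maximin y = minimax y); apply/eqP; rewrite eq_le maximin_le_minimax //=.
have [[r rq]|single] := pselect (exists r : Q, r != q); last first.
  apply: (minimax_le_maximin_const (e0 := e0)) => // sigma e.
  apply: Prob_single => x.
  by case: (eqVneq x q) => // xq; case: single; exists x.
apply: (minimax_le_maximin e0 (fun _ => point_distr R a0)) => // [sigma e|].
  exact: Prob_le1 rq.
move=> l l_ge0 l_le1 s1 s2; exists (mix_strategy l_ge0 l_le1 s1 s2) => e.
exact: Prob_mix.
Qed.
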